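(* Let $X=\{0,1\}^{\mathbb Z}$, $\mu=(\tfrac12,\tfrac12)^{\mathbb Z}$, $T$ the two-sided shift, and $d(x,x')=\sum_{k\in\mathbb Z}2^{-|k|-2}|x_k-x'_k|$; let $\mathbf X=(X,d,\mu,T)$. With the finite array cubes equipped with the coordinate Euclidean metrics, for every $m\ge1$ and every $p\ge1$, \[\mathrm{Dep}_{2,m,p}(\mathbf X,\mathbf X)\ge\frac{5}{144\sqrt2}.\]
   Context: For a compact metric measure-preserving system $(X,d,\mu,T)$ paired with itself, $\mathcal J(T,T)$ is the set of Borel probability measures on $X\times X$ with both marginals $\mu$ invariant under $T\times T$. For $z_i=(x_i,y_i)$, $\mathcal D^X_{n,m}=(d(T^ax_i,T^bx_j))_{1\le i,j\le n,0\le a,b<m}$, $\mathcal D^Y_{n,m}=(d(T^ay_i,T^by_j))_{1\le i,j\le n,0\le a,b<m}$, $\Phi_{n,m}(\lambda)=\mathrm{Law}_{\lambda^{\otimes n}}(\mathcal D^X_{n,m},\mathcal D^Y_{n,m})$. $W_p$ is the $p$-Wasserstein distance on the finite array cube and $\mathrm{Dep}_{n,m,p}(\mathbf X,\mathbf X)=\sup_{\lambda\in\mathcal J(T,T)}W_p(\Phi_{n,m}(\lambda),\Phi_{n,m}(\mu\otimes\mu))$. *)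

From HB Require Import structures.
From mathcomp Require Import all_boot all_order all_algebra.
From mathcomp Require Import all_classical all_reals all_analysis.
Set Implicit Arguments. Unset Strict Implicit. Unset Printing Implicit Defensive.
Import Order.TTheory GRing.Theory Num.Theory.
Local Open Scope classical_set_scope.
Local Open Scope ring_scope.

Definition cylinders (I : Type) d (T : measurableType d) : set (set (I -> T)) :=
  [set S | exists i (A : set T), measurable A /\ S = [set f | A (f i)]].

Definition prodfun (I : Type) d (T : measurableType d) :=
  g_sigma_algebraType (@cylinders I d T).

(* X = {0,1}^Z with its product (= Borel) sigma-algebra *)
Definition X := prodfun int bool.

Definition shift (x : X) : X := fun k => x (k + 1)%R.

Definition shift2 (z : X * X) : X * X := (shift z.1, shift z.2).

Definition dX (R : realType) (x x' : X) : R :=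
  fine (\esum_(k in [set: int])
          (((2 : R) ^- (`|k|%N + 2)) * `|(x k)%:R - (x' k)%:R|)%:E).

(* mu is the Bernoulli (1/2,1/2)^Z measure: cylinder sets fixing the values
   on a finite set s of coordinates have measure 2^{-|s|}. *)
Definition bernoulli_half (R : realType) (mu : probability X R) : Prop :=
  forall (s : seq int) (b : int -> bool), uniq s ->
    mu [set x : X | all (fun k => x k == b k) s] = ((2 : R) ^- size s)%:E.

Definition joining (R : realType) (mu : probability X R)
    (lam : probability (X * X)%type R) : Prop :=
  [/\ (forall A : set X, measurable A -> lam (A `*` setT) = mu A),
      (forall A : set X, measurable A -> lam (setT `*` A) = mu A) &
      (forall A : set (X * X), measurable A -> lam (shift2 @^-1` A) = lam A)].

Definition idx (m : nat) := ('I_2 * 'I_2 * 'I_m * 'I_m)%type.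

Definition cube (R : realType) (m : nat) := prodfun (idx m) R.

Definition cube2 (R : realType) (m : nat) := (cube R m * cube R m)%type.

Definition cube_dist (R : realType) (m : nat) (u v : cube2 R m) : R :=
  Num.sqrt (\sum_(t : idx m) (u.1 t - v.1 t) ^+ 2
          + \sum_(t : idx m) (u.2 t - v.2 t) ^+ 2).

(* (D^X_{2,m}, D^Y_{2,m}) for the sample z_1 = (x_1,y_1), z_2 = (x_2,y_2) *)
Definition sample (i : 'I_2) (w : (X * X) * (X * X)) : X * X :=
  if val i == 0%N then w.1 else w.2.

Definition Dmap (R : realType) (m : nat) (w : (X * X) * (X * X)) : cube2 R m :=
  ((fun t : idx m => let: (i, j, a, b) := t in
      dX R (iter a shift (sample i w).1) (iter b shift (sample j w).1)) : cube R m,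
   (fun t : idx m => let: (i, j, a, b) := t in
      dX R (iter a shift (sample i w).2) (iter b shift (sample j w).2)) : cube R m).

Definition Phi2 (R : realType) (m : nat) (lam : set (X * X) -> \bar R) :
    set (cube2 R m) -> \bar R :=
  pushforward (lam \x lam)%E (@Dmap R m).

Definition coupling (R : realType) (m : nat) (nu1 nu2 : set (cube2 R m) -> \bar R)
    (pi : probability (cube2 R m * cube2 R m)%type R) : Prop :=
  (forall A : set (cube2 R m), measurable A -> pi (A `*` setT) = nu1 A) /\
  (forall A : set (cube2 R m), measurable A -> pi (setT `*` A) = nu2 A).

Definition Wp (R : realType) (m : nat) (p : R) (nu1 nu2 : set (cube2 R m) -> \bar R)
    : \bar R :=
  poweR (ereal_inf [set (\int[pi]_uv ((cube_dist uv.1 uv.2) `^ p)%:E)%E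
                   | pi in [set pi | coupling nu1 nu2 pi]]) p^-1.

Definition Dep2 (R : realType) (mu : probability X R) (m : nat) (p : R) : \bar R :=
  ereal_sup [set @Wp R m p (@Phi2 R m lam) (@Phi2 R m (mu \x mu)%E)
            | lam in [set lam | joining mu lam]].

(* Under the diagonal joining x |-> (x, x) the arrays D^X and D^Y coincide, so
   their (1,2)-entries at time 0, d(x1,x2) and d(y1,y2), agree almost surely.
   Under the independent joining mu (x) mu, flipping coordinate 0 of y2
   preserves mu and moves d(y1,y2) by exactly 1/4, so the two entries are
   1/8-close with probability at most 1/2.  Every coupling of the two laws
   therefore gives mass at least 1/2 to pairs of arrays at Euclidean distance
   at least 1/16, whence W_p >= (1/16) (1/2)^(1/p) >= 1/32 > 5/(144 sqrt 2). *)

From Pilot Require Import Defs.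
From HB Require Import structures.
From mathcomp Require Import all_boot all_order all_algebra.
From mathcomp Require Import all_classical all_reals all_analysis.
From mathcomp Require Import measurable_realfun ring lra.
Set Implicit Arguments. Unset Strict Implicit. Unset Printing Implicit Defensive.
Import Order.TTheory GRing.Theory Num.Theory.
Local Open Scope classical_set_scope.
Local Open Scope ring_scope.

Section probability_bounds.
Context {R : realType}.
Local Open Scope ereal_scope.

Lemma probability_fin_num d (T : measurableType d) (P : probability T R) (A : set T) :
  measurable A -> P A \is a fin_num.
Proof.
by move=> mA; rewrite ge0_fin_numE // (le_lt_trans (probability_le1 P mA)) ?ltry.
Qed.

Lemma probability_le_half_disjoint_preimage d (T : measurableType d)
    (P : probability T R) (g : T -> T) (E : set T) :
  measurable E -> measurable (g @^-1` E) -> P (g @^-1` E) = P E ->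
  E `&` g @^-1` E = set0 -> P E <= (2^-1)%:E.
Proof.
move=> mE mgE PgE dis.
have PU : P (E `|` g @^-1` E) = P E + P E.
  by rewrite (measureU P mE mgE dis); congr (_ + _).
have mEgE : measurable (E `|` g @^-1` E) by exact: measurableU.
have := probability_le1 P mEgE.
rewrite PU -(fineK (probability_fin_num P mE)) -EFinD !lee_fin; lra.
Qed.

Lemma product_measure_le d1 d2 (T1 : measurableType d1) (T2 : measurableType d2)
    (P1 : probability T1 R) (P2 : probability T2 R) (S : set (T1 * T2)) (c : R) :
  measurable S -> (forall x, P2 (xsection S x) <= c%:E) -> (P1 \x P2) S <= c%:E.
Proof.
move=> mS Sc; apply: (@le_trans _ _ (\int[P1]_x (cst c%:E x))).
  apply: ge0_le_integral => //; first exact: (measurable_fun_xsection P2 mS).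
  by move=> x _; exact: Sc.
by rewrite integral_cst //= (probability_setT P1) mule1.
Qed.

Lemma probability_setXC_ge d1 d2 (T1 : measurableType d1) (T2 : measurableType d2)
    (pi : probability (T1 * T2)%type R) (A : set T1) (B : set T2) (a b : R) :
  measurable A -> measurable B ->
  a%:E <= pi (A `*` setT) -> pi (setT `*` B) <= b%:E ->
  (a - b)%:E <= pi (A `*` ~` B).
Proof.
move=> mA mB Aa Bb.
have mAB : measurable (A `*` B) by exact: measurableX.
have mACB : measurable (A `*` ~` B) by apply: measurableX => //; exact: measurableC.
have split_AT : pi (A `*` setT) = pi (A `*` ~` B) + pi (A `*` B).
  rewrite -measureU //; last first.
    by apply/seteqP; split => // -[u v] [[/= _ nBv] [/= _ Bv]].
  congr (pi _); apply/seteqP; split => -[u v] //=.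
    by move=> [Au _]; have [Bv|nBv] := pselect (B v); [right|left].
  by case=> -[].
have ABb : pi (A `*` B) <= b%:E.
  apply: le_trans Bb; apply: le_measure; rewrite ?inE //; first exact: measurableX.
  by move=> [u v] [].
rewrite EFinB lee_subel_addr ?(probability_fin_num pi mACB) //.
by rewrite (le_trans Aa) // split_AT leeD2l.
Qed.

Lemma integral_ge_indic d (T : measurableType d) (P : {measure set T -> \bar R})
    (f : T -> R) (S : set T) (c : R) :
  measurable S -> (0 <= c)%R -> (forall x, 0 <= f x)%R ->
  (forall x, S x -> c <= f x)%R ->
  c%:E * P S <= \int[P]_x (f x)%:E.
Proof.
move=> mS c0 f0 Sc.
pose h := scale_nnsfun (indic_nnsfun R mS) c0.
rewrite ge0_integralTE; last by move=> x; rewrite lee_fin.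
apply: le_trans; last first.
  apply: ereal_sup_ubound; exists h => // x /=.
  rewrite mindicE; have [Sx|nSx] := boolP (x \in S).
    by rewrite mulr1 lee_fin Sc // -inE.
  by rewrite mulr0 lee_fin.
rewrite (_ : sintegral _ _ = c%:E * P S) //.
by rewrite -sintegral_indic; exact: sintegralrM.
Qed.

End probability_bounds.

Section wasserstein_lower_bound.
Context {R : realType} (m : nat).

Lemma cube_dist_ge0 (u v : cube2 R m) : 0 <= cube_dist u v.
Proof. exact: sqrtr_ge0. Qed.

Lemma cube_dist_ge_coord (u v : cube2 R m) (t : idx m) :
  `|u.1 t - v.1 t| <= cube_dist u v /\ `|u.2 t - v.2 t| <= cube_dist u v.
Proof.
have sqr_le (a : R) (F G : idx m -> R) : (forall s, 0 <= F s) -> (forall s, 0 <= G s) ->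
    F t = a ^+ 2 -> `|a| <= Num.sqrt (\sum_s F s + \sum_s G s).
  move=> F0 G0 Fa; rewrite -sqrtr_sqr ler_sqrt ?addr_ge0 ?sumr_ge0 //.
  by rewrite (bigD1 t) //= Fa -addrA lerDl addr_ge0 ?sumr_ge0.
split; first by apply: sqr_le => // s; exact: sqr_ge0.
by rewrite /cube_dist [X in Num.sqrt X]addrC; apply: sqr_le => // s; exact: sqr_ge0.
Qed.

Lemma Wp_ge (p : R) (nu1 nu2 : set (cube2 R m) -> \bar R)
    (S : set (cube2 R m * cube2 R m)) (delta q : R) :
  0 < p -> 0 <= delta -> 0 <= q -> measurable S ->
  (forall u v, S (u, v) -> delta <= cube_dist u v) ->
  (forall pi, coupling nu1 nu2 pi -> (q%:E <= pi S)%E) ->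
  ((delta * q `^ p^-1)%:E <= Wp p nu1 nu2)%E.
Proof.
move=> p0 delta0 q0 mS Sdelta Sq.
have dpq0 : 0 <= delta `^ p * q by rewrite mulr_ge0 ?powR_ge0.
have inf_ge : ((delta `^ p * q)%:E <= ereal_inf [set (\int[pi]_uv
    ((cube_dist uv.1 uv.2) `^ p)%:E)%E | pi in [set pi | coupling nu1 nu2 pi]])%E.
  apply: le_ereal_inf_tmp => _ [pi /Sq piS <-].
  apply: le_trans (integral_ge_indic pi
    (f := fun uv => cube_dist uv.1 uv.2 `^ p) (c := delta `^ p) mS (powR_ge0 _ _) _ _).
  - by rewrite EFinM; apply: lee_wpmul2l; rewrite // lee_fin powR_ge0.
  - by move=> uv; exact: powR_ge0.
  move=> [u v] /Sdelta duv; apply: ge0_ler_powR; rewrite ?nnegrE ?cube_dist_ge0 //.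
  exact: ltW.
rewrite /Wp; apply: le_trans (gt0_ler_poweR _ _ _ inf_ge); last first.
- by rewrite in_itv /= leey andbT (le_trans _ inf_ge) // lee_fin.
- by rewrite in_itv /= leey andbT lee_fin.
- by rewrite invr_ge0 ltW.
by rewrite poweR_EFin powRM ?powR_ge0 // -powRrM mulfV ?gt_eqF // powRr1.
Qed.

End wasserstein_lower_bound.

Lemma measurable_prodfun_coord (I : Type) d (T : measurableType d) (i : I) :
  measurable_fun setT (fun f : prodfun I T => f i).
Proof. by move=> _ A mA; rewrite setTI; apply: sub_sigma_algebra; exists i, A. Qed.

Lemma measurable_fun_X (f : X -> X) :
  (forall i (A : set bool), exists j (A' : set bool),
     f @^-1` [set x | A (x i)] = [set x | A' (x j)]) ->
  measurable_fun setT f.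
Proof.
move=> f_cyl; apply: (@measurability _ _ X X setT f (@cylinders int _ bool)) => //.
move=> _ [_ [i [A [_ ->]]] <-]; rewrite setTI.
by have [j [A' ->]] := f_cyl i A; apply: sub_sigma_algebra; exists j, A'.
Qed.

Lemma measurable_bool2 (P : set (bool * bool)) : measurable P.
Proof.
have -> : P = ([set true] `*` [set b | P (true, b)]) `|`
              ([set false] `*` [set b | P (false, b)]).
  apply/seteqP; split => [[[] b] /= Pb|[[] b] /= [[/= ? ?]|[/= ? ?]]] //=.
  - by left.
  - by right.
by apply: measurableU; apply: measurableX.
Qed.

Lemma measurable_fun_bool2 d (T : measurableType d) (f : bool * bool -> T) :
  measurable_fun setT f.
Proof. by move=> _ B _; exact: measurable_bool2. Qed.

Definition int_of_nat (n : nat) : int := if odd n then Negz n./2 else Posz n./2.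

Lemma int_of_nat_inj : injective int_of_nat.
Proof.
rewrite /int_of_nat => a b.
case: (boolP (odd a)) => oa; case: (boolP (odd b)) => ob // [] ab.
- by rewrite -[a]odd_double_half -[b]odd_double_half ab oa ob.
- by rewrite -[a]odd_double_half -[b]odd_double_half ab (negbTE oa) (negbTE ob).
Qed.

Lemma int_of_nat_surj : range int_of_nat = [set: int].
Proof.
apply/seteqP; split => // -[] n _.
- by exists n.*2 => //; rewrite /int_of_nat odd_double doubleK.
- by exists n.*2.+1 => //; rewrite /int_of_nat /= odd_double /= uphalf_double.
Qed.

Lemma int_of_nat_eq0 n : (int_of_nat n == 0) = (n == 0%N).
Proof.
rewrite /int_of_nat; case: (boolP (odd n)) => [|on]; first by case: n.
apply/idP/idP => [/eqP [] n0|/eqP-> //].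
by rewrite -[n]odd_double_half n0 (negbTE on).
Qed.

Lemma absz_int_of_nat n : `|int_of_nat n|%N = uphalf n.
Proof. by rewrite uphalf_half /int_of_nat; case: (odd n). Qed.

Section shift_metric.
Context {R : realType}.

Definition dX_term (x y : X) (k : int) : R :=
  2 ^- (`|k|%N + 2) * `|(x k)%:R - (y k)%:R|.

Lemma dX_term_ge0 x y k : 0 <= dX_term x y k.
Proof. by rewrite mulr_ge0 ?invr_ge0 ?exprn_ge0. Qed.

Lemma dX_term_le x y n : dX_term x y (int_of_nat n) <= 2 ^- (n./2 + 2).
Proof.
have dist_le1 : `|(x (int_of_nat n))%:R - (y (int_of_nat n))%:R| <= 1 :> R.
  by case: (x _); case: (y _); rewrite ?subrr ?normr0 ?subr0 ?sub0r ?normrN ?normr1.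
apply: le_trans (_ : 2 ^- (`|int_of_nat n|%N + 2) <= _).
  by rewrite -[leRHS]mulr1 ler_wpM2l // invr_ge0 exprn_ge0.
rewrite lef_pV2 ?posrE ?exprn_gt0 // ler_eXn2l ?ltr1n // leq_add2r.
by rewrite absz_int_of_nat uphalf_half leq_addl.
Qed.

Lemma sum_half_weights N : \sum_(0 <= n < N.*2) 2 ^- (n./2 + 2) = 1 - 2 ^- N :> R.
Proof.
elim: N => [|N IH]; first by rewrite big_geq // expr0 invr1 subrr.
rewrite doubleS !big_nat_recr //= IH uphalf_double doubleK !exprD !exprS !invfM.
by field; rewrite expf_neq0 // pnatr_eq0.
Qed.

Lemma sum_half_weights_le1 N : \sum_(0 <= n < N) 2 ^- (n./2 + 2) <= 1 :> R.
Proof.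
have w0 n : 0 <= 2 ^- (n./2 + 2) :> R by rewrite invr_ge0 exprn_ge0.
apply: le_trans (_ : \sum_(0 <= n < N.*2) 2 ^- (n./2 + 2) <= _).
  rewrite [leRHS](big_cat_nat _ (n := N)) //= ?leq_double ?leq_addl //; last first.
    by rewrite -addnn leq_addr.
  by rewrite lerDl sumr_ge0.
by rewrite sum_half_weights lerBlDr lerDl invr_ge0 exprn_ge0.
Qed.

Local Open Scope ereal_scope.

Lemma dX_series x y :
  dX R x y = fine (\sum_(n <oo) (dX_term x y (int_of_nat n))%:E).
Proof.
rewrite /dX (_ : [set: int] = int_of_nat @` (xpredT : pred nat)); last first.
  by rewrite -int_of_nat_surj; apply/seteqP; split => k [n _ <-]; exists n.
rewrite (esum_pred_image (fun k => (dX_term x y k)%:E)) //.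
- by move=> n _; rewrite lee_fin dX_term_ge0.
- by move=> a b _ _; exact: int_of_nat_inj.
Qed.

Lemma dX_series_le1 x y : \sum_(n <oo) (dX_term x y (int_of_nat n))%:E <= 1.
Proof.
apply: lime_le; first by apply: is_cvg_nneseries => n _ _; rewrite lee_fin dX_term_ge0.
apply: nearW => N; rewrite sumEFin lee_fin.
by apply: le_trans (sum_half_weights_le1 N); apply: ler_sum => n _; exact: dX_term_le.
Qed.

Lemma measurable_dX : measurable_fun setT (fun xy : X * X => dX R xy.1 xy.2).
Proof.
rewrite (_ : (fun xy : X * X => _) = fun xy =>
    fine (\sum_(n <oo) (dX_term xy.1 xy.2 (int_of_nat n))%:E)); last first.
  by apply/funext => xy; rewrite dX_series.
apply: (measurableT_comp (fine_measurable _)) => //.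
apply: ge0_emeasurable_sum => [n xy _ _|n _]; first by rewrite lee_fin dX_term_ge0.
pose k := int_of_nat n.
rewrite (_ : (fun xy : X * X => _) = (fun b : bool * bool =>
    (2 ^- (`|k|%N + 2) * `|b.1%:R - b.2%:R| : R)%:E) \o (fun xy => (xy.1 k, xy.2 k))) //.
apply: measurableT_comp; first exact: measurable_fun_bool2.
by apply: measurable_fun_pair; apply: measurableT_comp (measurable_prodfun_coord _) _.
Qed.

Definition flip0 (y : X) : X := fun k => if k == 0%R then ~~ y k else y k.

Lemma dX_flip0 x y : (`|dX R x (flip0 y) - dX R x y| = 4^-1)%R.
Proof.
have split0 z : dX R x z = (dX_term x z 0 +
    fine (\sum_(1 <= n <oo) (dX_term x z (int_of_nat n))%:E))%R.
  have term_ge0 n : 0 <= (dX_term x z (int_of_nat n))%:E by rewrite lee_fin dX_term_ge0.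
  have tail_ge0 : 0 <= \sum_(1 <= n <oo) (dX_term x z (int_of_nat n))%:E.
    by apply: nneseries_ge0 => n _ _.
  have tail_fin : \sum_(1 <= n <oo) (dX_term x z (int_of_nat n))%:E \is a fin_num.
    rewrite ge0_fin_numE //; apply: le_lt_trans (le_lt_trans (dX_series_le1 x z) (ltry _)).
    by rewrite (nneseries_split 0 1) // big_nat1 leeDr.
  by rewrite dX_series (nneseries_split 0 1) // big_nat1 fineD.
rewrite !split0 (_ : \sum_(1 <= n <oo) _ = \sum_(1 <= n <oo) (dX_term x y (int_of_nat n))%:E).
  have quarter : (2 ^- (`|0%R|%N + 2) = 4^-1 :> R)%R by rewrite add0n expr2 -natrM.
  rewrite opprD addrACA subrr addr0 /dX_term /flip0 eqxx /= quarter.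
  by case: (x 0%R); case: (y 0%R); rewrite /= !(subrr, subr0, sub0r, normrN, normr1,
    normr0, mulr0, mulr1) ger0_norm // invr_ge0.
apply: congr_lim; apply/funext => N; apply: eq_big_nat => n /andP[n1 _].
have : int_of_nat n != 0%R by rewrite int_of_nat_eq0 -lt0n.
by rewrite /dX_term /flip0 => /negbTE ->.
Qed.

End shift_metric.

Definition cyl (s : seq int) (b : int -> bool) : set X :=
  [set x : X | all (fun k => x k == b k) s].

Lemma cyl_nil b : cyl [::] b = setT.
Proof. by apply/seteqP; split. Qed.

Lemma measurable_cyl s b : measurable (cyl s b).
Proof.
elim: s => [|k s IH]; first by rewrite cyl_nil.
rewrite (_ : cyl (k :: s) b = [set x : X | [set b k] (x k)] `&` cyl s b).
  by apply: measurableI => //; apply: sub_sigma_algebra; exists k, [set b k].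
apply/seteqP; split => x /=; first by move=> /andP[/eqP].
by move=> [xk xs]; rewrite /cyl /= xk eqxx.
Qed.

(* [set0] is included so that the family is closed under intersection. *)
Definition cylinders_uniq : set (set X) :=
  [set S | S = set0 \/ exists s b, uniq s /\ S = cyl s b].

Lemma cylinders_uniq_generate : @measurable _ X = <<s cylinders_uniq >>.
Proof.
apply/seteqP; split.
- apply: smallest_sub; first exact: smallest_sigma_algebra.
  move=> _ [i [A [_ ->]]]; apply: sub_sigma_algebra.
  have [At|nAt] := pselect (A true); have [Af|nAf] := pselect (A false).
  + right; exists [::], xpredT; split => //; rewrite cyl_nil.
    by apply/seteqP; split => // x _ /=; case: (x i).
  + right; exists [:: i], xpredT; split => //.
    apply/seteqP; split => x; rewrite /cyl /= andbT; first by case: (x i) => // /nAf.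
    by move=> /eqP ->.
  + right; exists [:: i], xpred0; split => //.
    apply/seteqP; split => x; rewrite /cyl /= andbT; first by case: (x i) => // /nAt.
    by move=> /eqP ->.
  + by left; apply/seteqP; split => x //=; case: (x i) => [/nAt|/nAf].
- apply: smallest_sub; first exact: sigma_algebra_measurable.
  by move=> _ [->|[s [b [_ ->]]]]; [exact: measurable0|exact: measurable_cyl].
Qed.

Lemma cylinders_uniq_setI_closed : setI_closed cylinders_uniq.
Proof.
move=> _ _ [->|[s1 [b1 [_ ->]]]] [->|[s2 [b2 [_ ->]]]];
  try by left; rewrite ?set0I ?setI0.
have [[k [k1 k2 b12]]|consistent] :=
  pselect (exists k, [/\ k \in s1, k \in s2 & b1 k != b2 k]).
  left; apply/seteqP; split => // x /= [/allP /(_ _ k1) /eqP h1 /allP /(_ _ k2) /eqP h2].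
  by move: b12; rewrite -h1 -h2 eqxx.
right; exists (undup (s1 ++ s2)), (fun k => if k \in s1 then b1 k else b2 k).
split; first exact: undup_uniq.
apply/seteqP; split => x /=.
- move=> [/allP h1 /allP h2]; apply/allP => k; rewrite mem_undup mem_cat.
  by case: ifP => ks1 /= hk; [exact: h1|exact: h2].
- move=> /allP h; split; apply/allP => k ks.
  + by have := h k; rewrite mem_undup mem_cat ks => /(_ isT).
  + have := h k; rewrite mem_undup mem_cat ks orbT => /(_ isT).
    case: ifP => // ks1 /eqP ->.
    by apply/negPn/negP => b12; apply: consistent; exists k.
Qed.

Lemma measurable_shift : measurable_fun setT Defs.shift.
Proof. by apply: measurable_fun_X => i A; exists (i + 1), A. Qed.

Lemma measurable_flip0 : measurable_fun setT flip0.
Proof.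
apply: measurable_fun_X => i A; exists i, [set b | A (if i == 0 then ~~ b else b)].
by apply/seteqP; split => x /=; rewrite /flip0; case: (i == 0).
Qed.

Definition diag (x : X) : X * X := (x, x).

Lemma measurable_diag : measurable_fun setT diag.
Proof. exact: measurable_fun_pair. Qed.

HB.instance Definition _ := isMeasurableFun.Build _ _ X (X * X)%type diag measurable_diag.

Section bernoulli_invariance.
Context {R : realType} (mu : probability X R).
Hypothesis mu_bernoulli : bernoulli_half mu.

Lemma bernoulli_preimage (f : X -> X) : measurable_fun setT f ->
  (forall s b, uniq s -> exists s' b',
     [/\ uniq s', size s' = size s & f @^-1` cyl s b = cyl s' b']) ->
  forall A, measurable A -> mu (f @^-1` A) = mu A.
Proof.
move=> mf f_cyl A mA.
pose f' : {mfun X >-> X} := HB.pack f (isMeasurableFun.Build _ _ _ _ f mf).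
apply: (@measure_unique _ R X cylinders_uniq (fun=> setT) cylinders_uniq_generate
  cylinders_uniq_setI_closed _ _ (distribution mu f') mu) => //.
- by move=> _; right; exists [::], xpred0; rewrite cyl_nil.
- by apply/seteqP; split => // x _; exists 0%N.
- move=> _ [->|[s [b [us ->]]]]; first by rewrite !measure0.
  change (mu (f @^-1` cyl s b) = mu (cyl s b)).
  have [s' [b' [us' ss' ->]]] := f_cyl s b us.
  by rewrite /cyl !mu_bernoulli // ss'.
- by move=> _; change (mu (f @^-1` setT) < +oo)%E; rewrite probability_setT ltry.
Qed.

Lemma bernoulli_shift_preimage A : measurable A -> mu (Defs.shift @^-1` A) = mu A.
Proof.
move: A; apply: (bernoulli_preimage measurable_shift) => s b us.
exists [seq k + 1 | k <- s], (fun k => b (k - 1)); split.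
- by rewrite map_inj_uniq // => u v; apply: addIr.
- by rewrite size_map.
- apply/seteqP; split => x; rewrite /cyl /= all_map => /allP xs; apply/allP => k ks /=.
    by rewrite addrK; exact: xs.
  by have := xs k ks; rewrite /= addrK.
Qed.

Lemma bernoulli_flip0_preimage A : measurable A -> mu (flip0 @^-1` A) = mu A.
Proof.
move: A; apply: (bernoulli_preimage measurable_flip0) => s b us.
exists s, (fun k => if k == 0 then ~~ b k else b k); split => //.
apply/seteqP; split => x; rewrite /cyl /= => /allP xs; apply/allP => k /xs /=;
  by rewrite /flip0; case: (k == 0); case: (x k); case: (b k).
Qed.

Definition diag_joining : probability (X * X)%type R := distribution mu diag.

Lemma joining_diag : joining mu diag_joining.
Proof.
split=> A mA.
- change (mu (diag @^-1` (A `*` setT)) = mu A).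
  by congr (mu _); apply/seteqP; split => x //= [].
- change (mu (diag @^-1` (setT `*` A)) = mu A).
  by congr (mu _); apply/seteqP; split => x //= [].
- change (mu (Defs.shift @^-1` (diag @^-1` A)) = mu (diag @^-1` A)).
  by apply: bernoulli_shift_preimage; rewrite -[_ @^-1` _]setTI; exact: measurable_diag.
Qed.

End bernoulli_invariance.

Section dX_gap_estimates.
Context {R : realType} (mu : probability X R).
Hypothesis mu_bernoulli : bernoulli_half mu.

(* For the sample w = ((x1, y1), (x2, y2)): the (1,2)-entry of D^X minus that of
   D^Y, both at times (0, 0). *)
Definition dX_gap (w : (X * X) * (X * X)) : R := dX R w.1.1 w.2.1 - dX R w.1.2 w.2.2.

Lemma measurable_dX_gap : measurable_fun setT dX_gap.
Proof.
have mdX (f g : (X * X) * (X * X) -> X) : measurable_fun setT f -> measurable_fun setT g ->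
    measurable_fun setT (fun w => dX R (f w) (g w)).
  by move=> mf mg; exact: measurableT_comp (@measurable_dX R) (measurable_fun_pair mf mg).
apply: measurable_funB; apply: mdX; apply: measurableT_comp; by [].
Qed.

Lemma measurable_dX_gap_small : measurable [set w | `|dX_gap w| < 8^-1].
Proof.
rewrite (_ : [set w | _] = dX_gap @^-1` `]-(8^-1), 8^-1[%classic).
  by rewrite -[_ @^-1` _]setTI; exact: measurable_dX_gap.
by apply/seteqP; split => w; rewrite /= in_itv /= ltr_norml.
Qed.

Lemma bernoulli_dX_near_le_half (c : R) (x : X) :
  (mu [set y | `|c - dX R x y| < 8^-1]%R <= (2^-1)%:E)%E.
Proof.
set E := [set y | _].
have mE : measurable E.
  rewrite (_ : E = (fun y => c - dX R x y) @^-1` `]-(8^-1), 8^-1[%classic).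
    rewrite -[_ @^-1` _]setTI; apply: measurable_funB => //.
    exact: measurableT_comp (@measurable_dX R)
      (measurable_fun_pair (measurable_cst x) (@measurable_id _ X setT)).
  by apply/seteqP; split => y; rewrite /E /= in_itv /= ltr_norml.
have mfE : measurable (flip0 @^-1` E) by rewrite -[_ @^-1` _]setTI; exact: measurable_flip0.
apply: (probability_le_half_disjoint_preimage mE mfE).
  exact: bernoulli_flip0_preimage.
apply/seteqP; split => // y [/= near_y near_fy].
have := @dX_flip0 R x y; apply/eqP; rewrite lt_eqF //.
rewrite (_ : (_ - _) = (c - dX R x y) - (c - dX R x (flip0 y))); last by ring.
rewrite (le_lt_trans (ler_normB _ _)) // (_ : 4^-1 = 8^-1 + 8^-1); last by field.
exact: ltrD.
Qed.

Lemma independent_dX_gap_small :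
  (((mu \x mu) \x (mu \x mu)) [set w | `|dX_gap w| < 8^-1]%R <= (2^-1)%:E)%E.
Proof.
apply: (product_measure_le ((mu \x mu)%E : probability _ R) measurable_dX_gap_small).
move=> [x1 y1]; apply: (product_measure_le mu (measurable_xsection _ measurable_dX_gap_small)).
by move=> x2; rewrite !xsectionE; exact: (bernoulli_dX_near_le_half (dX R x1 x2) y1).
Qed.

Lemma diag_dX_gap_zero :
  ((diag_joining mu \x diag_joining mu) [set w | dX_gap w = 0%R] = 1)%E.
Proof.
change (\int[diag_joining mu]_w (diag_joining mu \o xsection [set w | dX_gap w = 0%R]) w = 1)%E.
rewrite ge0_integral_distribution; last 2 first.
- apply: (measurable_fun_xsection (diag_joining mu)).
  by have := measurable_dX_gap measurableT (measurable_set1 0); rewrite setTI.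
- by move=> w; exact: measure_ge0.
transitivity (\int[mu]_x (cst 1 x))%E; last first.
  by rewrite integral_cst //= (probability_setT mu) mule1.
apply: eq_integral => x _; rewrite /= xsectionE.
change (mu (diag @^-1` [set y | dX_gap (diag x, y) = 0%R]) = 1)%E.
rewrite (_ : _ @^-1` _ = setT) ?probability_setT //.
by apply/seteqP; split => // y _; rewrite /= /dX_gap /= subrr.
Qed.

End dX_gap_estimates.

Section array_gap_estimates.
Context {R : realType} (mu : probability X R) (m : nat).
Hypotheses (mu_bernoulli : bernoulli_half mu) (m_gt0 : (0 < m)%N).

Definition idx01 : idx m := (ord0, ord_max, Ordinal m_gt0, Ordinal m_gt0).

Definition cube_gap (u : cube2 R m) : R := u.1 idx01 - u.2 idx01.

Lemma measurable_cube_gap : measurable_fun setT cube_gap.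
Proof.
by apply: measurable_funB; apply: measurableT_comp (measurable_prodfun_coord _) _.
Qed.

Definition cube_gap_zero : set (cube2 R m) := [set u | cube_gap u = 0].
Definition cube_gap_small : set (cube2 R m) := [set u | `|cube_gap u| < 8^-1].

Lemma measurable_cube_gap_zero : measurable cube_gap_zero.
Proof. by have := measurable_cube_gap measurableT (measurable_set1 0); rewrite setTI. Qed.

Lemma measurable_cube_gap_small : measurable cube_gap_small.
Proof.
rewrite (_ : cube_gap_small = cube_gap @^-1` `]-(8^-1), 8^-1[%classic).
  by rewrite -[_ @^-1` _]setTI; exact: measurable_cube_gap.
by apply/seteqP; split => u; rewrite /cube_gap_small /= in_itv /= ltr_norml.
Qed.

(* [cube_gap (Dmap w)] reduces to [dX_gap w]. *)
Lemma Phi2_diag_cube_gap_zero : (@Phi2 R m (diag_joining mu) cube_gap_zero = 1)%E.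
Proof. exact: diag_dX_gap_zero. Qed.

Lemma Phi2_independent_cube_gap_small :
  (@Phi2 R m (mu \x mu)%E cube_gap_small <= (2^-1)%:E)%E.
Proof. exact: independent_dX_gap_small. Qed.

Lemma cube_dist_ge_cube_gap (u v : cube2 R m) :
  cube_gap u = 0 -> 8^-1 <= `|cube_gap v| -> 16^-1 <= cube_dist u v.
Proof.
rewrite /cube_gap => /eqP; rewrite subr_eq0 => /eqP u12 v_far.
have [d1 _] := cube_dist_ge_coord u v idx01.
have [_ d2] := cube_dist_ge_coord u v idx01.
have : `|v.1 idx01 - v.2 idx01| <= `|u.1 idx01 - v.1 idx01| + `|u.2 idx01 - v.2 idx01|.
  rewrite (_ : _ - _ = (u.2 idx01 - v.2 idx01) - (u.1 idx01 - v.1 idx01)).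
    by rewrite [leRHS]addrC ler_normB.
  by rewrite u12; ring.
lra.
Qed.

Lemma coupling_Phi2_far (pi : probability (cube2 R m * cube2 R m)%type R) :
  coupling (@Phi2 R m (diag_joining mu)) (@Phi2 R m (mu \x mu)%E) pi ->
  ((2^-1)%:E <= pi (cube_gap_zero `*` ~` cube_gap_small))%E.
Proof.
move=> [pi1 pi2]; rewrite (_ : 2^-1 = 1 - 2^-1); last by field.
apply: probability_setXC_ge measurable_cube_gap_zero measurable_cube_gap_small _ _.
- by rewrite pi1 ?Phi2_diag_cube_gap_zero //; exact: measurable_cube_gap_zero.
- by rewrite pi2 ?Phi2_independent_cube_gap_small //; exact: measurable_cube_gap_small.
Qed.

Lemma Wp_Phi2_diag_independent (p : R) : 0 < p ->
  ((16^-1 * 2^-1 `^ p^-1)%:E <= Wp p (@Phi2 R m (diag_joining mu)) (@Phi2 R m (mu \x mu)%E))%E.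
Proof.
move=> p_gt0; apply: Wp_ge coupling_Phi2_far => //.
- apply: measurableX; first exact: measurable_cube_gap_zero.
  exact: measurableC measurable_cube_gap_small.
- move=> u v [/= u0 /negP]; rewrite /cube_gap_small /= -leNgt.
  exact: cube_dist_ge_cube_gap.
Qed.

End array_gap_estimates.

Lemma five_div_144_sqrt2_le {R : realType} (p : R) : 1 <= p ->
  5 / (144 * Num.sqrt 2) <= 16^-1 * 2^-1 `^ p^-1.
Proof.
move=> p1; have sqrt2_ge : 10 / 9 <= Num.sqrt (2 : R).
  have := sqrtr_ge0 (2 : R); have : Num.sqrt (2 : R) ^+ 2 = 2 by rewrite sqr_sqrtr.
  rewrite expr2; nra.
apply: le_trans (_ : 16^-1 * 2^-1 <= _).
  by rewrite ler_pdivrMr ?mulr_gt0 //; lra.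
rewrite ler_pM2l // ger1_powR //; last by rewrite invf_le1 //; lra.
by apply/andP; split; lra.
Qed.

Theorem proposition18 (R : realType) (mu : probability X R) :
  bernoulli_half mu ->
  forall (m : nat) (p : R), (1 <= m)%N -> 1 <= p ->
  ((5 / (144 * Num.sqrt 2) : R)%:E <= Dep2 mu m p)%E.
Proof.
move=> mu_bernoulli m p m_gt0 p_ge1.
have p_gt0 : 0 < p by lra.
apply: (@le_trans _ _ (Wp p (@Phi2 R m (diag_joining mu)) (@Phi2 R m (mu \x mu)%E))).
  apply: le_trans (Wp_Phi2_diag_independent mu_bernoulli m_gt0 p_gt0).
  by rewrite lee_fin five_div_144_sqrt2_le.
by apply: ereal_sup_ubound; exists (diag_joining mu) => //; exact: joining_diag.
Qed.
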